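(* Let $n\geq 2$ and let $L_n$ be the graph of linear $[n]$-phenylene (defined in the context). Then the base polynomial counting distances between pairs of degree-2 vertices of $L_n$ is \begin{eqnarray*} H^{2,2}_{b}(L_{n}) &=& 6x+(3n-2)x^{3}+2\sum_{k=2}^{n}(n-k+3)x^{3k-2}+4\sum_{k=1}^{n-1}x^{3k-1}\\ &&+6x^{3n-1}+2\sum_{k=2}^{n}(n-k)x^{3k}+2x^{3n}. \end{eqnarray*}
   Context: All graphs are finite, simple and connected; $d(u,v)$ denotes the shortest-path distance and $d_u$ the degree of a vertex $u$. For a graph $G$ and degrees $p\le q$, the base polynomial is $H^{p,q}_{b}(G)=\sum x^{d(u,v)}$, where the sum runs over all unordered pairs $\{u,v\}$ of distinct vertices of $G$ such that one of $u,v$ has degree $p$ and the other has degree $q$ (for $p=q$: both have degree $p$). Linear $[n]$-phenylene $L_n$: take $n$ hexagons $H_1,\dots,H_n$; hexagon $H_i$ is the 6-cycle $a_i b_i c_i d_i e_i f_i a_i$. For each $i=1,\dots,n-1$ add the two edges $b_i f_{i+1}$ and $c_i e_{i+1}$, so that $b_i c_i e_{i+1} f_{i+1}$ is a 4-cycle joining consecutive hexagons. Thus $L_n$ has $6n$ vertices, $n$ hexagons and $n-1$ squares, $2n+4$ vertices of degree 2 and $4n-4$ vertices of degree 3. *)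

From mathcomp Require Import all_boot all_order all_algebra.
Set Implicit Arguments. Unset Strict Implicit. Unset Printing Implicit Defensive.
Import GRing.Theory.
Local Open Scope ring_scope.

Definition gdeg (T : finType) (e : rel T) (u : T) : nat := #|[set v | e u v]|.

Fixpoint within (T : finType) (e : rel T) (k : nat) (u v : T) : bool :=
  match k with
  | 0 => u == v
  | k'.+1 => within e k' u v || [exists w, within e k' u w && e w v]
  end.

(* shortest-path distance: the least k with a walk of length <= k from u to v
   (for a connected graph on #|T| vertices, such k < #|T| always exists) *)
Definition gdist (T : finType) (e : rel T) (u v : T) : nat :=
  find (fun k => within e k u v) (iota 0 #|T|).

Definition Hb (N : nat) (e : rel 'I_N) (p q : nat) : {poly int} :=
  \sum_(u : 'I_N) \sum_(v : 'I_N | (u < v)%N &&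
      (((gdeg e u == p) && (gdeg e v == q)) || ((gdeg e u == q) && (gdeg e v == p))))
     'X^(gdist e u v).

(* Linear [n]-phenylene L_n on vertex set 'I_(6*n): vertex m is the vertex of
   hexagon H_(m %/ 6) at position m %% 6, positions 0..5 standing for
   a,b,c,d,e,f.  Edges: the hexagon cycles a b c d e f a, plus
   b_i f_(i+1) and c_i e_(i+1). *)
Definition phen_adj (u v : nat) : bool :=
  (let i := u %/ 6 in let a := u %% 6 in
  let j := v %/ 6 in let b := v %% 6 in
  [|| (i == j) && ((a.+1 %% 6 == b) || (b.+1 %% 6 == a)),
      (j == i.+1) && (((a == 1) && (b == 5)) || ((a == 2) && (b == 4)))
    | (i == j.+1) && (((b == 1) && (a == 5)) || ((b == 2) && (a == 4)))])%N.

Arguments phen_adj : clear implicits.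
Definition phenylene (n : nat) : rel 'I_(6 * n) :=
  fun u v => phen_adj (nat_of_ord u) (nat_of_ord v).
Arguments phenylene : clear implicits.

From mathcomp Require Import all_boot all_order all_algebra.
From mathcomp Require Import zify ring.
Import GRing.Theory.

(* Put hexagon H_i into the columns 3i, 3i+1, 3i+2 of a ladder with two rows.
   Then L_n is the ladder P_2 x P_(3n) without the rungs of the columns
   x = 1 (mod 3), and distances are explicit: |x - x'|, plus 1 for changing rows
   (some rung lies between two distinct columns), or plus 3 inside a rungless
   column.  The vertices of degree 2 fill the columns 0, 3n - 1 and x = 1 (mod 3),
   so twice H^{2,2}_b plus the diagonal is a sum over pairs of such columns; the
   pairs of rungless columns give a Toeplitz sum  sum_(i, j < n) F |i - j|. *)

Section ShortestPaths.

Variables (T : finType) (e : rel T) (s : T) (d : T -> nat).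
Hypotheses (d_eq0 : forall v, (d v == 0) = (v == s))
           (d_edge : forall v w, e v w -> d w <= (d v).+1)
           (d_descent : forall v, 0 < d v -> exists2 w, e w v & d w = (d v).-1).

Lemma within_dist_le k v : within e k s v -> d v <= k.
Proof.
elim: k v => [|k IHk] v /=; first by move/eqP <-; rewrite leqn0 d_eq0.
case/orP => [/IHk|/existsP[w /andP[/IHk dw /d_edge]]]; lia.
Qed.

Lemma within_dist v : within e (d v) s v.
Proof.
have [m dv] : exists m, d v = m by exists (d v).
elim: m v dv => [|m IHm] v dv; rewrite dv /=; first by rewrite eq_sym -d_eq0 dv.
have [|w ewv dw] := d_descent v; first by rewrite dv.
rewrite dv /= in dw.
by apply/orP; right; apply/existsP; exists w; rewrite ewv andbT -{1}dw; apply: IHm.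
Qed.

Lemma dist_attained v k : k <= d v -> exists w, d w = k.
Proof.
have [m dv] : exists m, d v = m by exists (d v).
elim: m v dv => [|m IHm] v dv; first by rewrite dv leqn0 => /eqP ->; exists v.
rewrite dv leq_eqVlt ltnS => /orP[/eqP ->|km]; first by exists v.
have [|w _ dw] := d_descent v; first by rewrite dv.
by rewrite dv /= in dw; apply: (IHm w dw); rewrite dw.
Qed.

Lemma dist_lt_card v : d v < #|T|.
Proof.
rewrite -(size_codom d) -(size_iota 0 (d v).+1).
apply: uniq_leq_size (iota_uniq _ _) _ => k.
by rewrite mem_iota add0n ltnS => /dist_attained[w <-]; apply: codom_f.
Qed.

Lemma gdist_eq v : gdist e s v = d v.
Proof.
have dvT := dist_lt_card v.
rewrite /gdist -(subnKC (ltnW dvT)) iotaD find_cat size_iota add0n.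
have -> : has (fun k => within e k s v) (iota 0 (d v)) = false.
  by apply/hasP => -[k]; rewrite mem_iota => /andP[_ kv] /within_dist_le; lia.
by rewrite -(subnSK dvT) /= within_dist addn0.
Qed.

End ShortestPaths.

(* Position a = 0, ..., 5 (that is a, ..., f) of hexagon H_i lies in column
   3i + hex_x a and in row hex_y a; hex_pos inverts this inside one hexagon. *)
Definition hex_x (a : nat) : nat := match a with 0 | 3 => 1 | 1 | 2 => 2 | _ => 0 end.
Definition hex_y (a : nat) : bool := [|| a == 2, a == 3 | a == 4].
Definition coord_x (u : nat) : nat := 3 * (u %/ 6) + hex_x (u %% 6).
Definition coord_y (u : nat) : bool := hex_y (u %% 6).

Definition hex_pos (c : nat) (y : bool) : nat :=
  match c, y with
  | 0, false => 5 | 0, true => 4 | 1, false => 0 | 1, true => 3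
  | _, false => 1 | _, true => 2
  end.
Definition vertex_at (x : nat) (y : bool) : nat := 6 * (x %/ 3) + hex_pos (x %% 3) y.

Lemma coord_x_hex i a : a < 6 -> coord_x (6 * i + a) = 3 * i + hex_x a.
Proof.
move=> a6; rewrite /coord_x.
have -> : (6 * i + a) %/ 6 = i by lia.
by have -> : (6 * i + a) %% 6 = a by lia.
Qed.

Lemma coord_y_hex i a : a < 6 -> coord_y (6 * i + a) = hex_y a.
Proof. by move=> a6; rewrite /coord_y; have -> : (6 * i + a) %% 6 = a by lia. Qed.

Lemma vertex_at_hex i c y : c < 3 -> vertex_at (3 * i + c) y = 6 * i + hex_pos c y.
Proof.
move=> c3; rewrite /vertex_at.
have -> : (3 * i + c) %/ 3 = i by lia.
by have -> : (3 * i + c) %% 3 = c by lia.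
Qed.

Lemma coord_vertex_at x y : coord_x (vertex_at x y) = x /\ coord_y (vertex_at x y) = y.
Proof.
case: (edivnP x 3) => i c -> /= c3; rewrite mulnC vertex_at_hex //.
have c6 : hex_pos c y < 6 by case: c c3 y => [|[|[|]]] // _ [].
by rewrite coord_x_hex // coord_y_hex //; case: c c3 {c6} y => [|[|[|]]] // _ [].
Qed.

Lemma coord_x_vertex_at x y : coord_x (vertex_at x y) = x.
Proof. by case: (coord_vertex_at x y). Qed.

Lemma coord_y_vertex_at x y : coord_y (vertex_at x y) = y.
Proof. by case: (coord_vertex_at x y). Qed.

Lemma vertex_at_coord u : vertex_at (coord_x u) (coord_y u) = u.
Proof.
case: (edivnP u 6) => i a -> /= a6; rewrite mulnC coord_x_hex // coord_y_hex //.
by rewrite vertex_at_hex; case: a a6 => [|[|[|[|[|[|]]]]]].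
Qed.

Lemma coord_x_lt {n u} : u < 6 * n -> coord_x u < 3 * n.
Proof.
case: (edivnP u 6) => i a -> /= a6; rewrite mulnC coord_x_hex //.
have : hex_x a < 3 by case: a a6 => [|[|[|[|[|[|]]]]]].
lia.
Qed.

Lemma vertex_at_lt {n x} y : x < 3 * n -> vertex_at x y < 6 * n.
Proof.
case: (edivnP x 3) => i c -> /= c3; rewrite mulnC vertex_at_hex //.
have : hex_pos c y < 6 by case: c c3 y => [|[|[|]]] // _ [].
lia.
Qed.

Lemma big_phenylene_coords {R : Type} {idx : R} (op : Monoid.com_law idx) {n} (F : nat -> R) :
  \big[op/idx]_(u < 6 * n) F u
    = \big[op/idx]_(0 <= x < 3 * n) \big[op/idx]_(y : bool) F (vertex_at x y).
Proof.
rewrite big_mkord pair_bigA /=.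
pose h (p : 'I_(3 * n) * bool) := Ordinal (vertex_at_lt p.2 (ltn_ord p.1)).
pose h' (u : 'I_(6 * n)) := (Ordinal (coord_x_lt (ltn_ord u)), coord_y u).
rewrite (reindex h) //; exists h' => [[x y] _ | u _]; last first.
  by apply: val_inj; rewrite /= vertex_at_coord.
by rewrite /h' /= coord_y_vertex_at; congr (_, _); apply: val_inj; rewrite /= coord_x_vertex_at.
Qed.

Definition ladder_adj (x : nat) (y : bool) (x' : nat) (y' : bool) : bool :=
  ((y == y') && (`|x - x'| == 1)) || [&& x == x', x %% 3 != 1 & y != y'].

Lemma phen_adj_ladder u v :
  phen_adj u v = ladder_adj (coord_x u) (coord_y u) (coord_x v) (coord_y v).
Proof.
case: (edivnP u 6) => i a -> /= a6; case: (edivnP v 6) => j b -> /= b6.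
rewrite !(mulnC _ 6) !coord_x_hex // !coord_y_hex // /phen_adj /ladder_adj.
have -> : (6 * i + a) %/ 6 = i by lia.
have -> : (6 * i + a) %% 6 = a by lia.
have -> : (6 * j + b) %/ 6 = j by lia.
have -> : (6 * j + b) %% 6 = b by lia.
by case: a a6 => [|[|[|[|[|[|]]]]]] // _; case: b b6 => [|[|[|[|[|[|]]]]]] //= _; lia.
Qed.

Definition row_gap (x x' : nat) : nat := if (x == x') && (x %% 3 == 1) then 3 else 1.

Definition ladder_dist (x : nat) (y : bool) (x' : nat) (y' : bool) : nat :=
  `|x - x'| + (y != y') * row_gap x x'.

Lemma ladder_dist_eq0 x y x' y' : (ladder_dist x y x' y' == 0) = (x == x') && (y == y').
Proof. by rewrite /ladder_dist /row_gap; case: y y' => [] []; case: ifP; lia. Qed.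

Lemma ladder_distC x y x' y' : ladder_dist x y x' y' = ladder_dist x' y' x y.
Proof. by rewrite /ladder_dist /row_gap; case: y y' => [] []; do ? case: ifP; lia. Qed.

Lemma ladder_dist_adj x y x1 y1 x2 y2 :
  ladder_adj x1 y1 x2 y2 -> ladder_dist x y x2 y2 <= (ladder_dist x y x1 y1).+1.
Proof.
by rewrite /ladder_adj /ladder_dist /row_gap; case: y y1 y2 => [] [] [] /=; do ? case: ifP; lia.
Qed.

Lemma ladder_dist_descent {N x y x' y'} :
  x < N -> x' < N -> 0 < ladder_dist x y x' y' ->
  exists2 p : nat * bool, (p.1 < N) && ladder_adj p.1 p.2 x' y'
    & ladder_dist x y p.1 p.2 = (ladder_dist x y x' y').-1.
Proof.
rewrite /ladder_adj /ladder_dist /row_gap => xN x'N d0.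
case: (boolP ((y != y') && (x' %% 3 != 1))) => [/andP[yy' rung] | no_rung].
  by exists (x', y); case: y y' yy' d0 => [] [] //=; do ? case: ifP; lia.
(* Otherwise walk along the row of x' towards x (either way out of a rungless column). *)
case: (ltngtP x x') => [lt | gt | eq].
- by exists (x'.-1, y'); case: y y' no_rung d0 => [] [] /=; do ? case: ifP; lia.
- by exists (x'.+1, y'); case: y y' no_rung d0 => [] [] /=; do ? case: ifP; lia.
- by exists (x'.-1, y'); case: y y' no_rung d0 => [] [] /=; do ? case: ifP; lia.
Qed.

Lemma gdist_phenylene n (u v : 'I_(6 * n)) :
  gdist (phenylene n) u v = ladder_dist (coord_x u) (coord_y u) (coord_x v) (coord_y v).
Proof.
apply: (@gdist_eq _ _ u (fun w : 'I_(6 * n) =>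
  ladder_dist (coord_x u) (coord_y u) (coord_x w) (coord_y w))) => [w|w1 w2|w].
- rewrite ladder_dist_eq0; apply/andP/eqP => [[/eqP ux /eqP uy]|-> //].
  by apply: val_inj; rewrite /= -(vertex_at_coord u) ux uy vertex_at_coord.
- by rewrite /phenylene phen_adj_ladder; apply: ladder_dist_adj.
- move=> /(ladder_dist_descent (coord_x_lt (ltn_ord u)) (coord_x_lt (ltn_ord w))).
  case=> -[x y] /= /andP[xn adj] dist.
  exists (Ordinal (vertex_at_lt y xn));
    by rewrite /phenylene /= ?phen_adj_ladder coord_x_vertex_at coord_y_vertex_at.
Qed.

Lemma sum_nat_eq_and N c (b : bool) : \sum_(0 <= j < N) ((j == c) && b) = (c < N) && b.
Proof.
rewrite (eq_bigr (fun j => if j == c then nat_of_bool b else 0)); last by move=> j _; case: eqP.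
by rewrite -big_mkcond big_nat1_eq; case: (c < N).
Qed.

Lemma gdeg_phenylene n (u : 'I_(6 * n)) :
  gdeg (phenylene n) u = (0 < coord_x u) + ((coord_x u).+1 < 3 * n) + (coord_x u %% 3 != 1).
Proof.
set x := coord_x u.
have xn : x < 3 * n := coord_x_lt (ltn_ord u).
pose adj w := nat_of_bool (ladder_adj x (coord_y u) (coord_x w) (coord_y w)).
rewrite /gdeg -sum1_card big_mkcond /= (eq_bigr (fun v : 'I_(6 * n) => adj v)); last first.
  by move=> v _; rewrite inE /phenylene phen_adj_ladder /adj; case: ladder_adj.
rewrite big_phenylene_coords (eq_bigr (fun x' =>
    ((x' == x.-1) && (0 < x)) + ((x' == x.+1) && true) + ((x' == x) && (x %% 3 != 1)))); last first.
  move=> x' _; rewrite big_bool /= /adj !coord_x_vertex_at !coord_y_vertex_at /ladder_adj.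
  by case: (coord_y u) => /=; lia.
rewrite !big_split /= !sum_nat_eq_and; lia.
Qed.

Definition deg2_column n x := [|| x == 0, x == 3 * n - 1 | x %% 3 == 1].

Lemma gdeg_phenylene_eq2 n (u : 'I_(6 * n)) :
  (gdeg (phenylene n) u == 2) = deg2_column n (coord_x u).
Proof. by have := coord_x_lt (ltn_ord u); rewrite gdeg_phenylene /deg2_column; lia. Qed.

Local Open Scope ring_scope.

Lemma sum_symmetric_pairs {V : nmodType} {N} (f : 'I_N -> 'I_N -> V) :
  (forall i j, f i j = f j i) ->
  \sum_(i < N) \sum_(j < N) f i j
    = \sum_(i < N) f i i + (\sum_(i < N) \sum_(j < N | (i < j)%N) f i j) *+ 2.
Proof.
move=> fC.
have row i : \sum_(j < N) f i j
    = f i i + \sum_(j < N | (i < j)%N) f i j + \sum_(j < N | (j < i)%N) f i j.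
  rewrite (bigD1 i) //= (bigID (fun j : 'I_N => (i < j)%N)) /= addrA.
  by congr (_ + _ + _); apply: eq_bigl => j; rewrite -val_eqE /=; lia.
rewrite (eq_bigr _ (fun i _ => row i)) !big_split /= -addrA mulr2n; congr (_ + (_ + _)).
rewrite (exchange_big_dep xpredT) //=.
by apply: eq_bigr => i _; apply: eq_bigr => j _; apply: fC.
Qed.

Lemma sum_absdiff (V : nmodType) (F : nat -> V) n :
  \sum_(0 <= i < n) \sum_(0 <= j < n) F `|i - j|%N
    = F 0%N *+ n + (\sum_(1 <= k < n) F k *+ (n - k)) *+ 2.
Proof.
elim: n => [|n IHn]; first by rewrite !big_geq // mulr0n mul0rn addr0.
have weights : \sum_(1 <= k < n.+1) F k *+ (n.+1 - k)
    = \sum_(1 <= k < n) F k *+ (n - k) + \sum_(1 <= k < n.+1) F k.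
  case: n {IHn} => [|n]; first by rewrite !big_geq // addr0.
  rewrite [LHS]big_nat_recr // [X in _ + X]big_nat_recr //= subSnn mulr1n addrA.
  congr (_ + _); rewrite -big_split; apply: eq_big_nat => k /andP[_ kn].
  by rewrite subSn ?mulrSr //; lia.
set R := \sum_(1 <= k < n.+1) F k.
have col : \sum_(0 <= i < n) F `|i - n|%N = R.
  rewrite [R]big_add1 big_nat_rev /=; apply: eq_big_nat => i /andP[_ ni]; congr F; lia.
have row : \sum_(0 <= j < n.+1) F `|n - j|%N = R + F 0%N.
  by rewrite big_nat_recr //= -col distnn; congr (_ + _); apply: eq_bigr => j _; rewrite distnC.
rewrite big_nat_recr //= (eq_bigr (fun i : nat => \sum_(0 <= j < n) F `|i - j|%N + F `|i - n|%N));
  last by move=> i _; rewrite big_nat_recr.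
rewrite big_split /= IHn col row weights -/R [F 0%N *+ n.+1]mulrSr mulrnDl [R *+ 2]mulr2n -!addrA.
by congr (_ + _); rewrite [R + F 0%N]addrC !(addrCA _ (F 0%N)).
Qed.

Lemma sum_mod3_eq1 (V : nmodType) n (G : nat -> V) :
  \sum_(0 <= x < 3 * n | (x %% 3 == 1)%N) G x = \sum_(0 <= i < n) G (3 * i + 1)%N.
Proof.
elim: n => [|n IHn]; first by rewrite !big_geq.
have -> : (3 * n.+1 = (3 * n).+3)%N by lia.
rewrite big_mkcond /= in IHn; rewrite big_mkcond !big_nat_recr //= IHn.
have -> : ((3 * n) %% 3 == 1)%N = false by lia.
have -> : ((3 * n).+1 %% 3 == 1)%N = true by lia.
have -> : ((3 * n).+2 %% 3 == 1)%N = false by lia.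
by rewrite !addr0 addn1.
Qed.

Definition ladder_weight (x x' : nat) : {poly int} :=
  \sum_(y : bool) \sum_(y' : bool) 'X^(ladder_dist x y x' y').

Definition apart_weight (k : nat) : {poly int} := ('X^k + 'X^(k.+1)) *+ 2.

Definition middle_weight (k : nat) : {poly int} :=
  if k == 0%N then (1 + 'X^3) *+ 2 else apart_weight (3 * k).

Lemma ladder_weightE x x' :
  ladder_weight x x' = ('X^`|x - x'| + 'X^(`|x - x'| + row_gap x x')) *+ 2.
Proof.
rewrite /ladder_weight !big_bool /= /ladder_dist /= !mul0n !mul1n !addn0 mulr2n.
by rewrite [X in _ + X]addrC.
Qed.

Lemma ladder_weightC x x' : ladder_weight x x' = ladder_weight x' x.
Proof. by rewrite !ladder_weightE distnC /row_gap eq_sym; case: eqP => // ->. Qed.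

Lemma ladder_weight_lt x x' : (x < x')%N -> ladder_weight x x' = apart_weight (x' - x).
Proof.
move=> xx'; rewrite ladder_weightE /row_gap (_ : x == x' = false); last by lia.
by rewrite addn1 /apart_weight (_ : `|x - x'|%N = (x' - x)%N) //; lia.
Qed.

Lemma ladder_weight_diag x : ladder_weight x x = (1 + 'X^(row_gap x x)) *+ 2.
Proof. by rewrite ladder_weightE distnn add0n expr0. Qed.

Lemma ladder_weight_middle i j :
  ladder_weight (3 * i + 1)%N (3 * j + 1)%N = middle_weight `|i - j|.
Proof.
rewrite /middle_weight; case: (ltngtP i j) => [ij|ji|<-].
- by rewrite ladder_weight_lt ?ifN_eq; try lia; congr apart_weight; lia.
- by rewrite ladder_weightC ladder_weight_lt ?ifN_eq; try lia; congr apart_weight; lia.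
by rewrite distnn ladder_weight_diag /row_gap eqxx (_ : (3 * i + 1) %% 3 = 1)%N //; lia.
Qed.

Section Deg2Columns.

Variable n : nat.
Hypothesis n_gt0 : (0 < n)%N.

Lemma sum_deg2_columns (V : nmodType) (G : nat -> V) :
  \sum_(0 <= x < 3 * n | deg2_column n x) G x
    = G 0%N + \sum_(0 <= i < n) G (3 * i + 1)%N + G (3 * n - 1)%N.
Proof.
rewrite (bigID (fun x => (x %% 3 == 1)%N)) /=.
rewrite [X in _ + X](bigID (fun x => x == 0%N)) /= addrA [X in X + _]addrC.
congr (_ + _ + _).
- rewrite (eq_bigl (fun x => x == 0%N)) ?big_nat1_eq; last by move=> x; rewrite /deg2_column; lia.
  by have -> : (0 <= 0 < 3 * n)%N by lia.
- by rewrite -sum_mod3_eq1; apply: eq_bigl => x; rewrite /deg2_column; lia.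
- rewrite (eq_bigl (fun x => x == (3 * n - 1)%N)) ?big_nat1_eq; last first.
    by move=> x; rewrite /deg2_column; lia.
  by have -> : (0 <= 3 * n - 1 < 3 * n)%N by lia.
Qed.

Lemma ladder_weight_first_last :
  ladder_weight 0%N (3 * n - 1)%N = ('X^(3 * n - 1) + 'X^(3 * n)) *+ 2.
Proof.
rewrite ladder_weight_lt ?subn0; last by lia.
by rewrite /apart_weight (_ : (3 * n - 1).+1 = 3 * n)%N //; lia.
Qed.

Lemma ladder_weight_end_diag x : ((x == 0) || (x == 3 * n - 1))%N ->
  ladder_weight x x = (1 + 'X) *+ 2.
Proof.
move=> x_end; rewrite ladder_weight_diag /row_gap eqxx (_ : (x %% 3 == 1)%N = false) //.
by move: x_end; lia.
Qed.

Lemma sum_weight_first_column :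
  \sum_(0 <= x < 3 * n | deg2_column n x) ladder_weight 0%N x
    = (1 + 'X) *+ 2 + \sum_(0 <= j < n) apart_weight (3 * j + 1)%N
      + ('X^(3 * n - 1) + 'X^(3 * n)) *+ 2.
Proof.
rewrite sum_deg2_columns ladder_weight_end_diag // ladder_weight_first_last.
by congr (_ + _ + _); apply: eq_bigr => j _; rewrite ladder_weight_lt ?subn0 // addn1.
Qed.

Lemma sum_weight_last_column :
  \sum_(0 <= x < 3 * n | deg2_column n x) ladder_weight (3 * n - 1)%N x
    = ('X^(3 * n - 1) + 'X^(3 * n)) *+ 2 + \sum_(0 <= j < n) apart_weight (3 * j + 1)%N
      + (1 + 'X) *+ 2.
Proof.
rewrite sum_deg2_columns ladder_weightC ladder_weight_first_last.
rewrite ladder_weight_end_diag ?eqxx ?orbT // [in RHS]big_nat_rev /=.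
congr (_ + _ + _); apply: eq_big_nat => j /andP[_ j_n].
by rewrite ladder_weightC ladder_weight_lt; [congr apart_weight | ]; lia.
Qed.

Lemma sum_weight_middle_column i : (i < n)%N ->
  \sum_(0 <= x < 3 * n | deg2_column n x) ladder_weight (3 * i + 1)%N x
    = apart_weight (3 * i + 1)%N + \sum_(0 <= j < n) middle_weight `|i - j|
      + apart_weight (3 * (n - i.+1) + 1)%N.
Proof.
move=> i_n; rewrite sum_deg2_columns ladder_weightC !ladder_weight_lt; try lia.
rewrite subn0 (_ : 3 * n - 1 - (3 * i + 1) = 3 * (n - i.+1) + 1)%N; last by lia.
by congr (_ + _ + _); apply: eq_bigr => j _; rewrite ladder_weight_middle.
Qed.

End Deg2Columns.

(* The three lines count the pairs among the end vertices e_1, f_1, b_n, c_n,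
   the pairs of an end vertex with some a_i or d_i, and the pairs among the a_i, d_i. *)
Definition H22_closed n : {poly int} :=
  ('X + 'X^(3 * n - 1) + 'X^(3 * n)) *+ 2
  + (\sum_(0 <= i < n) ('X^(3 * i + 1) + 'X^(3 * i + 2))) *+ 4
  + 'X^3 *+ n + (\sum_(1 <= k < n) ('X^(3 * k) + 'X^(3 * k + 1)) *+ (n - k)) *+ 2.

Lemma sum_ladder_weight n : (0 < n)%N ->
  \sum_(0 <= x < 3 * n | deg2_column n x)
    \sum_(0 <= x' < 3 * n | deg2_column n x') ladder_weight x x'
    = (H22_closed n + n.+2%:R) *+ 2.
Proof.
move=> n0.
have end_middle : \sum_(0 <= j < n) apart_weight (3 * j + 1)%N
    = (\sum_(0 <= j < n) ('X^(3 * j + 1) + 'X^(3 * j + 2))) *+ 2.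
  by rewrite -sumrMnl; apply: eq_bigr => j _; rewrite /apart_weight -addnS.
have middle_middle : \sum_(1 <= k < n) middle_weight k *+ (n - k)
    = (\sum_(1 <= k < n) ('X^(3 * k) + 'X^(3 * k + 1)) *+ (n - k)) *+ 2.
  rewrite -sumrMnl; apply: eq_big_nat => k /andP[k1 _].
  by rewrite /middle_weight /apart_weight (_ : (k == 0%N) = false) 1?mulrnAC ?addn1 //; lia.
have middle_rows :
    \sum_(0 <= i < n) \sum_(0 <= x < 3 * n | deg2_column n x) ladder_weight (3 * i + 1)%N x
    = (\sum_(0 <= j < n) apart_weight (3 * j + 1)%N) *+ 2
      + \sum_(0 <= i < n) \sum_(0 <= j < n) middle_weight `|i - j|.
  under eq_big_nat => i /andP[_ i_n] do rewrite sum_weight_middle_column //.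
  rewrite big_split big_split /= addrAC mulr2n; congr (_ + _ + _).
  by rewrite [RHS]big_nat_rev; apply: eq_bigr => i _; rewrite add0n.
rewrite sum_deg2_columns // sum_weight_first_column // sum_weight_last_column // middle_rows.
rewrite sum_absdiff middle_middle end_middle /middle_weight /= /H22_closed; ring.
Qed.

Lemma H22_closedE n : (2 <= n)%N ->
  H22_closed n =
    'X *+ 6 + 'X^3 *+ (3 * n - 2)
    + \sum_(2 <= k < n.+1) 'X^(3 * k - 2) *+ (2 * (n - k + 3))
    + \sum_(1 <= k < n) 'X^(3 * k - 1) *+ 4
    + 'X^(3 * n - 1) *+ 6
    + \sum_(2 <= k < n.+1) 'X^(3 * k) *+ (2 * (n - k))
    + 'X^(3 * n) *+ 2.
Proof.
case: n => [//|m] m_gt0.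
have split_end_middle : \sum_(0 <= i < m.+1) ('X^(3 * i + 1) + 'X^(3 * i + 2))
    = 'X + (\sum_(1 <= k < m.+1) 'X^(3 * k + 1))
      + ((\sum_(0 <= k < m) 'X^(3 * k + 2)) + 'X^(3 * m + 2)) :> {poly int}.
  by rewrite big_split /= big_ltn // muln0 add0n expr1 [\sum_(0 <= i < m.+1) _]big_nat_recr.
have split_middle_middle : \sum_(1 <= k < m.+1) ('X^(3 * k) + 'X^(3 * k + 1)) *+ (m.+1 - k)
    = 'X^3 *+ m + (\sum_(2 <= k < m.+1) 'X^(3 * k) *+ (m.+1 - k))
      + (\sum_(1 <= k < m.+1) 'X^(3 * k + 1) *+ (m.+1 - k)) :> {poly int}.
  rewrite (eq_bigr _ (fun k _ => mulrnDl _ _ _)) big_split /= big_ltn //.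
  by rewrite muln1 subSS subn0.
have shift1 : \sum_(2 <= k < m.+2) 'X^(3 * k - 2) *+ (2 * (m.+1 - k + 3))
    = (\sum_(1 <= k < m.+1) 'X^(3 * k + 1) *+ (m.+1 - k)) *+ 2
      + (\sum_(1 <= k < m.+1) 'X^(3 * k + 1)) *+ 4 :> {poly int}.
  rewrite big_add1 /= -!sumrMnl -big_split; apply: eq_big_nat => k /andP[_ km].
  rewrite (_ : 3 * k.+1 - 2 = 3 * k + 1)%N; last by lia.
  by rewrite (_ : 2 * (m.+1 - k.+1 + 3) = (m.+1 - k) * 2 + 4)%N ?mulrnDr ?mulrnA //; lia.
have shift2 : \sum_(1 <= k < m.+1) 'X^(3 * k - 1) *+ 4
    = (\sum_(0 <= k < m) 'X^(3 * k + 2)) *+ 4 :> {poly int}.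
  rewrite big_add1 /= -sumrMnl; apply: eq_bigr => k _.
  by rewrite (_ : 3 * k.+1 - 1 = 3 * k + 2)%N //; lia.
have shift3 : \sum_(2 <= k < m.+2) 'X^(3 * k) *+ (2 * (m.+1 - k))
    = (\sum_(2 <= k < m.+1) 'X^(3 * k) *+ (m.+1 - k)) *+ 2 :> {poly int}.
  rewrite big_nat_recr /=; last by lia.
  rewrite subnn muln0 mulr0n addr0 -sumrMnl.
  by apply: eq_bigr => k _; rewrite (mulnC 2) mulrnA.
rewrite /H22_closed split_end_middle split_middle_middle shift1 shift2 shift3.
rewrite (_ : 3 * m.+1 - 2 = 3 * m + 1)%N; last by lia.
rewrite (_ : 3 * m.+1 - 1 = 3 * m + 2)%N; last by lia.
ring.
Qed.

Definition deg2_pair_term n (u v : nat) : {poly int} :=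
  if deg2_column n (coord_x u) && deg2_column n (coord_x v)
  then 'X^(ladder_dist (coord_x u) (coord_y u) (coord_x v) (coord_y v)) else 0.

Lemma deg2_pair_termC n u v : deg2_pair_term n u v = deg2_pair_term n v u.
Proof. by rewrite /deg2_pair_term andbC ladder_distC. Qed.

Lemma Hb_phenylene n :
  Hb (phenylene n) 2 2 = \sum_(u < 6 * n) \sum_(v < 6 * n | (u < v)%N) deg2_pair_term n u v.
Proof.
apply: eq_bigr => u _; rewrite big_mkcond [RHS]big_mkcond; apply: eq_bigr => v _.
by rewrite orbb !gdeg_phenylene_eq2 gdist_phenylene; case: (u < v)%N.
Qed.

Lemma sum_deg2_pair_term n : (0 < n)%N ->
  \sum_(u < 6 * n) \sum_(v < 6 * n) deg2_pair_term n u v = (H22_closed n + n.+2%:R) *+ 2.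
Proof.
move=> n0.
have columns x x' :
    \sum_(y : bool) \sum_(y' : bool) deg2_pair_term n (vertex_at x y) (vertex_at x' y')
    = if deg2_column n x && deg2_column n x' then ladder_weight x x' else 0.
  rewrite /deg2_pair_term /ladder_weight !big_bool /= !coord_x_vertex_at !coord_y_vertex_at.
  by case: ifP; rewrite ?addr0.
rewrite (big_phenylene_coords _ (fun u => \sum_(v < 6 * n) deg2_pair_term n u v)).
under eq_bigr => x _ do under eq_bigr => y _ do rewrite big_phenylene_coords.
under eq_bigr => x _ do rewrite exchange_big (eq_bigr _ (fun x' _ => columns x x')).
rewrite -sum_ladder_weight // [RHS]big_mkcond; apply: eq_bigr => x _ /=.
case: (deg2_column n x); last by rewrite big1.
by rewrite [RHS]big_mkcond.
Qed.

Lemma sum_deg2_pair_term_diag n : (0 < n)%N ->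
  \sum_(u < 6 * n) deg2_pair_term n u u = n.+2%:R *+ 2.
Proof.
move=> n0; rewrite (big_phenylene_coords _ (fun u => deg2_pair_term n u u)).
rewrite (eq_bigr (fun x => if deg2_column n x then 1 *+ 2 else 0)); last first.
  move=> x _; rewrite /deg2_pair_term !big_bool /= !coord_x_vertex_at !coord_y_vertex_at andbb.
  by rewrite /ladder_dist distnn mul0n expr0; case: ifP; rewrite ?addr0.
rewrite -big_mkcond sum_deg2_columns // sumr_const_nat subn0.
ring.
Qed.

Theorem theorem2p1 (n : nat) (hn : (2 <= n)%N) :
  Hb (phenylene n) 2 2 =
    'X *+ 6 + 'X^3 *+ (3 * n - 2)
    + \sum_(2 <= k < n.+1) 'X^(3 * k - 2) *+ (2 * (n - k + 3))
    + \sum_(1 <= k < n) 'X^(3 * k - 1) *+ 4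
    + 'X^(3 * n - 1) *+ 6
    + \sum_(2 <= k < n.+1) 'X^(3 * k) *+ (2 * (n - k))
    + 'X^(3 * n) *+ 2.
Proof.
have n0 : (0 < n)%N by apply: ltnW.
have halve (p q : {poly int}) : p *+ 2 = q *+ 2 -> p = q.
  by move=> pq; apply/polyP => i; apply: (@Num.Theory.pmulrnI _ 2) => //; rewrite /= -!coefMn pq.
have := sum_symmetric_pairs (fun u v : 'I_(6 * n) => deg2_pair_term n u v) (deg2_pair_termC n).
rewrite sum_deg2_pair_term // sum_deg2_pair_term_diag // -Hb_phenylene -(H22_closedE _ hn).
by rewrite mulrnDl addrC => /addrI /halve.
Qed.
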